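(* Let $\mathcal{F}(X)\subseteq\Psi$ with admissible topology $\Delta$. If $\mathbb{F}$ is commutative and there is a base $\beta$ for the topology of $X$ with $U^+=\{A\in\Psi:A\subseteq U\}\in\Delta$ for every $U\in\beta$, then $(X,\mathbb{F})$ is weakly mixing if and only if $(\Psi,\overline{\mathbb{F}})$ is weakly mixing.
   Context: $(X,d)$ compact metric, $\mathbb{F}=(f_n)$ continuous self-maps with $f_n\circ f_m=f_m\circ f_n$ for all $n,m$; $\omega_n=f_n\circ\cdots\circ f_1$. Weakly mixing: for non-empty open $U_1,U_2,V_1,V_2$ there is $n$ with $\omega_n(U_i)\cap V_i\neq\emptyset$, $i=1,2$. $\mathcal{F}(X)$: non-empty finite subsets; $\Psi\subseteq\mathcal{K}(X)$ invariant under all $\omega_k$; induced system $\overline{\omega}_k(A)=\omega_k(A)$, notions defined analogously on $(\Psi,\Delta)$. Admissible topology: hit-and-miss or hit-and-far-miss type with $x\mapsto\{x\}$ continuous; induced maps continuous. *)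

From Stdlib Require Import Reals List.
Open Scope R_scope.

Definition is_metric {X : Type} (d : X -> X -> R) : Prop :=
  (forall x y, d x y = 0 <-> x = y) /\
  (forall x y, d x y = d y x) /\
  (forall x y z, d x z <= d x y + d y z).

Definition ball {X : Type} (d : X -> X -> R) (x : X) (r : R) : X -> Prop :=
  fun y => d x y < r.

Definition is_open {X : Type} (d : X -> X -> R) (U : X -> Prop) : Prop :=
  forall x, U x -> exists r, 0 < r /\ forall y, ball d x r y -> U y.

Definition is_closed {X : Type} (d : X -> X -> R) (C : X -> Prop) : Prop :=
  is_open d (fun x => ~ C x).

(* sequential compactness of a subset (equivalent to compactness in metric spaces) *)
Definition seq_compact {X : Type} (d : X -> X -> R) (A : X -> Prop) : Prop :=
  forall u : nat -> X, (forall n, A (u n)) ->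
  exists (phi : nat -> nat) (a : X),
    (forall n, (phi n < phi (S n))%nat) /\ A a /\
    forall eps, 0 < eps -> exists N, forall n, (N <= n)%nat -> d (u (phi n)) a < eps.

Definition compact_metric {X : Type} (d : X -> X -> R) : Prop :=
  is_metric d /\ seq_compact d (fun _ => True).

Definition continuous_map {X : Type} (d : X -> X -> R) (g : X -> X) : Prop :=
  forall x eps, 0 < eps -> exists delta, 0 < delta /\
    forall y, d x y < delta -> d (g x) (g y) < eps.

Definition is_base {X : Type} (d : X -> X -> R) (beta : (X -> Prop) -> Prop) : Prop :=
  (forall B, beta B -> is_open d B) /\
  (forall U, is_open d U -> forall x, U x -> exists B, beta B /\ B x /\ forall y, B y -> U y).

(* f i stands for f_{i+1}; omega f n = f_n o ... o f_1, omega f 0 = id *)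
Fixpoint omega {X : Type} (f : nat -> X -> X) (n : nat) : X -> X :=
  match n with
  | O => fun x => x
  | S k => fun x => f k (omega f k x)
  end.

Definition image {X : Type} (g : X -> X) (A : X -> Prop) : X -> Prop :=
  fun y => exists x, A x /\ g x = y.

Definition nonempty {T : Type} (A : T -> Prop) : Prop := exists x, A x.

Definition weakly_mixing {X : Type} (d : X -> X -> R) (f : nat -> X -> X) : Prop :=
  forall U1 U2 V1 V2 : X -> Prop,
    is_open d U1 -> is_open d U2 -> is_open d V1 -> is_open d V2 ->
    nonempty U1 -> nonempty U2 -> nonempty V1 -> nonempty V2 ->
    exists n, (1 <= n)%nat /\
      (exists x, U1 x /\ V1 (omega f n x)) /\
      (exists x, U2 x /\ V2 (omega f n x)).

Definition finite_nonempty {X : Type} (A : X -> Prop) : Prop :=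
  exists l : list X, l <> nil /\ forall x, A x <-> In x l.

Definition nonempty_compact {X : Type} (d : X -> X -> R) (A : X -> Prop) : Prop :=
  nonempty A /\ seq_compact d A.

Definition singleton {X : Type} (x : X) : X -> Prop := fun y => y = x.

Definition upper {X : Type} (Psi : (X -> Prop) -> Prop) (U : X -> Prop) :
  (X -> Prop) -> Prop := fun A => Psi A /\ forall x, A x -> U x.

Definition hit {X : Type} (U : X -> Prop) : (X -> Prop) -> Prop :=
  fun A => exists x, A x /\ U x.

Definition miss {X : Type} (C : X -> Prop) : (X -> Prop) -> Prop :=
  fun A => forall x, A x -> ~ C x.

Definition farmiss {X : Type} (d : X -> X -> R) (C : X -> Prop) : (X -> Prop) -> Prop :=
  fun A => exists eps, 0 < eps /\ forall a c, A a -> C c -> eps <= d a c.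

Definition generated_topology {X : Type} (Psi : (X -> Prop) -> Prop)
  (S : ((X -> Prop) -> Prop) -> Prop) (Delta : ((X -> Prop) -> Prop) -> Prop) : Prop :=
  forall W, Delta W <->
    ((forall A, W A -> Psi A) /\
     forall A, W A -> exists l : list ((X -> Prop) -> Prop),
        (forall S0, In S0 l -> S S0) /\ (forall S0, In S0 l -> S0 A) /\
        forall B, Psi B -> (forall S0, In S0 l -> S0 B) -> W B).

(* hit-and-miss (resp. hit-and-far-miss) topology: hit sets are all open sets,
   miss sets range over some family Mf of closed sets *)
Definition hit_and_miss_type {X : Type} (d : X -> X -> R)
  (Psi : (X -> Prop) -> Prop) (Delta : ((X -> Prop) -> Prop) -> Prop) : Prop :=
  exists Mf : (X -> Prop) -> Prop,
    (forall C, Mf C -> is_closed d C) /\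
    (generated_topology Psi
       (fun S0 => (exists U, is_open d U /\ S0 = hit U) \/
                  (exists C, Mf C /\ S0 = miss C)) Delta \/
     generated_topology Psi
       (fun S0 => (exists U, is_open d U /\ S0 = hit U) \/
                  (exists C, Mf C /\ S0 = farmiss d C)) Delta).

Definition admissible {X : Type} (d : X -> X -> R) (f : nat -> X -> X)
  (Psi : (X -> Prop) -> Prop) (Delta : ((X -> Prop) -> Prop) -> Prop) : Prop :=
  hit_and_miss_type d Psi Delta /\
  (* x |-> {x} is continuous X -> (Psi, Delta) *)
  (forall W, Delta W -> is_open d (fun x => W (singleton x))) /\
  (* induced maps omega_k-bar are continuous on (Psi, Delta) *)
  (forall k W, Delta W -> Delta (fun A => Psi A /\ W (image (omega f k) A))).

Definition hyper_weakly_mixing {X : Type} (f : nat -> X -> X)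
  (Delta : ((X -> Prop) -> Prop) -> Prop) : Prop :=
  forall U1 U2 V1 V2 : (X -> Prop) -> Prop,
    Delta U1 -> Delta U2 -> Delta V1 -> Delta V2 ->
    nonempty U1 -> nonempty U2 -> nonempty V1 -> nonempty V2 ->
    exists n, (1 <= n)%nat /\
      (exists A, U1 A /\ V1 (image (omega f n) A)) /\
      (exists A, U2 A /\ V2 (image (omega f n) A)).

(* Forward direction.  Commutativity makes ω_k commute with ω_n, so a pair of
   open sets (U₁ ∩ ω_n⁻¹U₂, V₁ ∩ ω_n⁻¹V₂) hits in time k only if both (U₁,V₁)
   and (U₂,V₂) do; iterating, weak mixing yields one time n serving any finite
   family of pairs of nonempty open sets.  Every open set of the hyperspace
   contains, around each of its points, a Vietoris neighbourhood
   ⟨G; P₁,…,P_k⟩ (sets inside G meeting every P_i): hit sets are of this form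
   and miss or far-miss sets contain a set of the form {A ⊆ G}.  Picking one
   point of each P_i ∩ ω_n⁻¹(Q_j) (with P₀ = G, Q₀ = K) gives a finite set in
   ⟨G; Pᵢ⟩ whose image under ω_n lies in ⟨K; Q_j⟩.
   Reverse direction.  Nonempty open sets of X contain basic sets U, whose
   hyperspace counterparts U⁺ are open and contain singletons. *)
From Stdlib Require Import Reals List Lra.
Open Scope R_scope.

Lemma is_open_True {X} (d : X -> X -> R) : is_open d (fun _ => True).
Proof. intros x _; exists 1; split; [lra | auto]. Qed.

Lemma is_open_and {X} (d : X -> X -> R) (U V : X -> Prop) :
  is_open d U -> is_open d V -> is_open d (fun x => U x /\ V x).
Proof.
  intros HU HV x [Ux Vx].
  destruct (HU x Ux) as [r1 [Hr1 HB1]], (HV x Vx) as [r2 [Hr2 HB2]].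
  exists (Rmin r1 r2); split; [now apply Rmin_pos|].
  intros y Hy; unfold ball in *; split; [apply HB1 | apply HB2]; unfold ball;
    eapply Rlt_le_trans; eauto; [apply Rmin_l | apply Rmin_r].
Qed.

Lemma is_open_preimage {X} (d : X -> X -> R) (g : X -> X) (U : X -> Prop) :
  continuous_map d g -> is_open d U -> is_open d (fun x => U (g x)).
Proof.
  intros Hg HU x Hx.
  destruct (HU (g x) Hx) as [r [Hr HB]], (Hg x r Hr) as [delta [Hdelta Hcont]].
  exists delta; split; [exact Hdelta|].
  intros y Hy; apply HB, Hcont, Hy.
Qed.

Lemma continuous_omega {X} (d : X -> X -> R) (f : nat -> X -> X) :
  (forall n, continuous_map d (f n)) -> forall n, continuous_map d (omega f n).
Proof.
  intros Hf n; induction n as [|n IH]; intros x eps Heps; simpl.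
  - exists eps; auto.
  - destruct (Hf n (omega f n x) eps Heps) as [d1 [Hd1 H1]].
    destruct (IH x d1 Hd1) as [d2 [Hd2 H2]].
    exists d2; split; [exact Hd2 | intros y Hy; apply H1, H2, Hy].
Qed.

Section Commuting.
Variables (X : Type) (f : nat -> X -> X).
Hypothesis f_comm : forall n m x, f n (f m x) = f m (f n x).

Lemma f_omega_comm k m x : f m (omega f k x) = omega f k (f m x).
Proof. induction k as [|k IH]; simpl; [reflexivity|]. now rewrite f_comm, IH. Qed.

Lemma omega_comm n k x : omega f n (omega f k x) = omega f k (omega f n x).
Proof. induction n as [|n IH]; simpl; [reflexivity|]. now rewrite IH, f_omega_comm. Qed.

End Commuting.

Section FiniteMixing.
Variables (X : Type) (d : X -> X -> R) (f : nat -> X -> X).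

Definition open_pair (p : (X -> Prop) * (X -> Prop)) : Prop :=
  is_open d (fst p) /\ is_open d (snd p) /\ nonempty (fst p) /\ nonempty (snd p).

Definition hits_at (n : nat) (p : (X -> Prop) * (X -> Prop)) : Prop :=
  exists x, fst p x /\ snd p (omega f n x).

Hypotheses (f_cont : forall n, continuous_map d (f n))
  (f_comm : forall n m x, f n (f m x) = f m (f n x))
  (Hwm : weakly_mixing d f).

Lemma open_pair_refine (p q : (X -> Prop) * (X -> Prop)) :
  open_pair p -> open_pair q ->
  exists r, open_pair r /\ forall k, hits_at k r -> hits_at k p /\ hits_at k q.
Proof.
  intros [Op1 [Op2 [Np1 Np2]]] [Oq1 [Oq2 [Nq1 Nq2]]].
  destruct (Hwm _ _ _ _ Op1 Op2 Oq1 Oq2 Np1 Np2 Nq1 Nq2)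
    as [n [_ [[x [Hx1 Hx2]] [y [Hy1 Hy2]]]]].
  exists (fun z => fst p z /\ fst q (omega f n z),
          fun z => snd p z /\ snd q (omega f n z)); split.
  - repeat split; simpl;
      try (apply is_open_and; [assumption | apply is_open_preimage;
           [apply continuous_omega, f_cont | assumption]]).
    + exists x; auto.
    + exists y; auto.
  - intros k [z [[Hz1 Hz2] [Hz3 Hz4]]]; split.
    + exists z; auto.
    + exists (omega f n z); split; [exact Hz2|].
      now rewrite (omega_comm _ _ f_comm k n z).
Qed.

Lemma open_pairs_refine (L : list ((X -> Prop) * (X -> Prop))) p :
  (forall q, In q (p :: L) -> open_pair q) ->
  exists r, open_pair r /\
    forall k, hits_at k r -> forall q, In q (p :: L) -> hits_at k q.
Proof.
  revert p; induction L as [|p' L IH]; intros p HL.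
  - exists p; split; [apply HL; left; reflexivity|].
    intros k Hk q [<- | []]; exact Hk.
  - destruct (IH p') as [r [Hr Hhit]]; [intros q Hq; apply HL; right; exact Hq|].
    destruct (open_pair_refine p r) as [s [Hs Hshit]]; [apply HL; left; auto | exact Hr|].
    exists s; split; [exact Hs|].
    intros k Hk q [<- | Hq]; apply Hshit in Hk; [apply Hk | apply (Hhit k); tauto].
Qed.

Lemma weakly_mixing_open_pairs (L : list ((X -> Prop) * (X -> Prop))) p :
  (forall q, In q (p :: L) -> open_pair q) ->
  exists n, (1 <= n)%nat /\ forall q, In q (p :: L) -> hits_at n q.
Proof.
  intros HL; destruct (open_pairs_refine L p HL) as [r [[O1 [O2 [N1 N2]]] Hhit]].
  destruct (Hwm _ _ _ _ O1 O1 O2 O2 N1 N1 N2 N2) as [n [Hn [Hr _]]].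
  exists n; split; [exact Hn | apply Hhit, Hr].
Qed.

End FiniteMixing.

Arguments open_pair {X} d p.
Arguments hits_at {X} f n p.

Lemma list_choice {T U} (Rel : T -> U -> Prop) (L : list T) :
  (forall a, In a L -> exists b, Rel a b) ->
  exists bs, (forall b, In b bs -> exists a, In a L /\ Rel a b) /\
             (forall a, In a L -> exists b, In b bs /\ Rel a b).
Proof.
  induction L as [|a L IH]; intros HL.
  - exists nil; split; intros ? [].
  - destruct (HL a (or_introl eq_refl)) as [b Hb].
    destruct IH as [bs [Hbs HL']]; [intros; apply HL; right; auto|].
    exists (b :: bs); split.
    + intros b' [<- | Hb']; [exists a; simpl; auto|].
      destruct (Hbs b' Hb') as [a' [? ?]]; exists a'; simpl; auto.
    + intros a' [<- | Ha']; [exists b; simpl; auto|].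
      destruct (HL' a' Ha') as [b' [? ?]]; exists b'; simpl; auto.
Qed.

Section Vietoris.
Variables (X : Type) (d : X -> X -> R).

Definition vietoris (G : X -> Prop) (Ps : list (X -> Prop)) (A : X -> Prop) : Prop :=
  (forall x, A x -> G x) /\ forall P, In P Ps -> hit P A.

Definition vietoris_around (S0 : (X -> Prop) -> Prop) (A0 : X -> Prop) : Prop :=
  exists G Ps, is_open d G /\ (forall P, In P Ps -> is_open d P) /\
    vietoris G Ps A0 /\ forall A, vietoris G Ps A -> S0 A.

Lemma vietoris_around_hit U A0 :
  is_open d U -> hit U A0 -> vietoris_around (hit U) A0.
Proof.
  intros HU HA0; exists (fun _ => True), (U :: nil).
  repeat split; auto using is_open_True.
  - intros P [<- | []]; exact HU.
  - intros P [<- | []]; exact HA0.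
  - intros A [_ HA]; apply HA; left; reflexivity.
Qed.

Lemma vietoris_around_miss C A0 :
  is_closed d C -> miss C A0 -> vietoris_around (miss C) A0.
Proof.
  intros HC HA0; exists (fun x => ~ C x), nil.
  split; [exact HC | split; [intros ? [] | split]].
  - split; [exact HA0 | intros ? []].
  - intros A [HA _] x Hx; apply HA, Hx.
Qed.

(* A set farther than eps from C stays at distance ≥ eps/2 from C once it is
   contained in the eps/2-neighbourhood of A0. *)
Lemma vietoris_around_farmiss C A0 :
  is_metric d -> farmiss d C A0 -> vietoris_around (farmiss d C) A0.
Proof.
  intros [Hd0 [_ Htri]] [eps [Heps Hfar]].
  exists (fun x => exists a, A0 a /\ d a x < eps / 2), nil.
  split; [| split; [intros ? [] | split; [split; [| intros ? []] |]]].
  - intros x [a [Ha Hax]]; exists (eps / 2 - d a x); split; [lra|].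
    intros y Hy; unfold ball in Hy; exists a; split; [exact Ha|].
    pose proof (Htri a x y); lra.
  - intros x Hx; exists x; split; [exact Hx|].
    rewrite (proj2 (Hd0 x x) eq_refl); lra.
  - intros A [HA _]; exists (eps / 2); split; [lra|].
    intros a' c Ha' Hc; destruct (HA a' Ha') as [a [Ha Haa']].
    pose proof (Hfar a c Ha Hc); pose proof (Htri a a' c); lra.
Qed.

Lemma vietoris_around_list (l : list ((X -> Prop) -> Prop)) A0 :
  (forall S0, In S0 l -> vietoris_around S0 A0) ->
  vietoris_around (fun A => forall S0, In S0 l -> S0 A) A0.
Proof.
  induction l as [|S0 l IH]; intros Hl.
  - exists (fun _ => True), nil.
    split; [apply is_open_True | split; [intros ? [] | split]].
    + split; [auto | intros ? []].
    + intros A _ S0 [].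
  - destruct (Hl S0 (or_introl eq_refl))
      as [G1 [Ps1 [HG1 [HPs1 [[HA1 Hh1] Hsub1]]]]].
    destruct IH as [G2 [Ps2 [HG2 [HPs2 [[HA2 Hh2] Hsub2]]]]];
      [intros; apply Hl; right; auto|].
    exists (fun x => G1 x /\ G2 x), (Ps1 ++ Ps2).
    repeat split; auto using is_open_and.
    + intros P HP; apply in_app_or in HP; destruct HP; auto.
    + intros P HP; apply in_app_or in HP; destruct HP; auto.
    + intros A [HA Hh] S [<- | HS]; [apply Hsub1 | apply Hsub2; auto];
        split; try (intros x Hx; apply (HA x Hx));
        intros P HP; apply Hh, in_or_app; auto.
Qed.

(* Replacing each P by P ∩ G makes every P a subset of G. *)
Lemma vietoris_shrink G Ps A :
  vietoris G Ps A <-> vietoris G (map (fun P x => P x /\ G x) Ps) A.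
Proof.
  split; intros [HA Hh]; split; auto.
  - intros P' HP'; apply in_map_iff in HP'; destruct HP' as [P [<- HP]].
    destruct (Hh P HP) as [x [Ax Px]]; exists x; auto.
  - intros P HP; destruct (Hh _ (in_map (fun P x => P x /\ G x) _ _ HP))
      as [x [Ax [Px _]]]; exists x; auto.
Qed.

Lemma hit_and_miss_vietoris_base (Psi : (X -> Prop) -> Prop) Delta W A0 :
  is_metric d -> hit_and_miss_type d Psi Delta -> Delta W -> W A0 ->
  Psi A0 /\ exists G Ps, is_open d G /\
    (forall P, In P Ps -> is_open d P /\ forall x, P x -> G x) /\
    vietoris G Ps A0 /\ forall A, Psi A -> vietoris G Ps A -> W A.
Proof.
  intros Hm [Mf [HMf Hgen]] HW HA0.
  assert (Hsub : Psi A0 /\ exists l, (forall S0, In S0 l -> vietoris_around S0 A0) /\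
            forall A, Psi A -> (forall S0, In S0 l -> S0 A) -> W A).
  { destruct Hgen as [Hgen | Hgen]; destruct (proj1 (Hgen W) HW) as [HPsi Hloc];
      destruct (Hloc A0 HA0) as [l [Hl [HlA0 HlW]]];
      (split; [apply HPsi, HA0 | exists l; split; [|exact HlW]]);
      intros S0 HS0; specialize (HlA0 S0 HS0);
      destruct (Hl S0 HS0) as [[U [HU ->]] | [C [HC ->]]];
      auto using vietoris_around_hit, vietoris_around_miss, vietoris_around_farmiss. }
  destruct Hsub as [HPsi [l [Hl HlW]]]; split; [exact HPsi|].
  destruct (vietoris_around_list l A0 Hl) as [G [Ps [HG [HPs [HGA0 HGW]]]]].
  exists G, (map (fun P x => P x /\ G x) Ps); split; [exact HG | split; [| split]].
  - intros P' HP'; apply in_map_iff in HP'; destruct HP' as [P [<- HP]].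
    split; [apply is_open_and; auto | tauto].
  - apply (proj1 (vietoris_shrink G Ps A0)), HGA0.
  - intros A HA HGA; apply HlW; [exact HA|]; apply HGW, (proj2 (vietoris_shrink G Ps A)), HGA.
Qed.

End Vietoris.

Arguments vietoris {X} G Ps A.

Lemma finite_set_between_vietoris {X} (f : nat -> X -> X) n
    (G K : X -> Prop) (Ps Qs : list (X -> Prop)) :
  (forall P, In P Ps -> forall x, P x -> G x) ->
  (forall Q, In Q Qs -> forall x, Q x -> K x) ->
  (forall p, In p (list_prod (G :: Ps) (K :: Qs)) -> hits_at f n p) ->
  exists A, finite_nonempty A /\ vietoris G Ps A /\ vietoris K Qs (image (omega f n) A).
Proof.
  intros HPs HQs Hhit.
  destruct (list_choice (fun p x => fst p x /\ snd p (omega f n x)) _ Hhit)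
    as [xs [Hxs Hcov]].
  assert (inL : forall s t, In s (G :: Ps) -> In t (K :: Qs) ->
            In (s, t) (list_prod (G :: Ps) (K :: Qs))) by (intros; apply in_prod_iff; auto).
  destruct (Hcov (G, K) (inL G K (or_introl eq_refl) (or_introl eq_refl)))
    as [x0 [Hx0 _]].
  exists (fun x => In x xs); repeat split.
  - exists xs; split; [intros E; rewrite E in Hx0; exact Hx0 | tauto].
  - intros x Hx; destruct (Hxs x Hx) as [[s t] [Hp [Hs _]]].
    apply in_prod_iff in Hp; destruct Hp as [[<- | HP] _]; eauto.
  - intros P HP; destruct (Hcov (P, K) (inL P K (or_intror HP) (or_introl eq_refl)))
      as [x [Hx [HPx _]]]; exists x; auto.
  - intros y [x [Hx <-]]; destruct (Hxs x Hx) as [[s t] [Hp [_ Ht]]].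
    apply in_prod_iff in Hp; destruct Hp as [_ [<- | HQ]]; eauto.
  - intros Q HQ; destruct (Hcov (G, Q) (inL G Q (or_introl eq_refl) (or_intror HQ)))
      as [x [Hx [_ HQx]]]; exists (omega f n x); split; [exists x; auto | exact HQx].
Qed.

Section Transfer.
Variables (X : Type) (d : X -> X -> R) (f : nat -> X -> X)
  (Psi : (X -> Prop) -> Prop) (Delta : ((X -> Prop) -> Prop) -> Prop).
Hypotheses (d_metric : is_metric d) (f_cont : forall n, continuous_map d (f n))
  (Psi_finite : forall A, finite_nonempty A -> Psi A)
  (Psi_nonempty : forall A, Psi A -> nonempty A).

Lemma open_pairs_of_vietoris (G K : X -> Prop) Ps Qs p :
  is_open d G -> nonempty G -> is_open d K -> nonempty K ->
  (forall P, In P Ps -> is_open d P /\ nonempty P) ->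
  (forall Q, In Q Qs -> is_open d Q /\ nonempty Q) ->
  In p (list_prod (G :: Ps) (K :: Qs)) -> open_pair d p.
Proof.
  intros HG NG HK NK HPs HQs Hp; destruct p as [s t].
  apply in_prod_iff in Hp; destruct Hp as [[<- | Hs] [<- | Ht]];
    try destruct (HPs s Hs); try destruct (HQs t Ht); repeat split; auto.
Qed.

Lemma hyper_hits_of_open_pairs (W V : (X -> Prop) -> Prop) A0 B0 :
  hit_and_miss_type d Psi Delta -> Delta W -> Delta V -> W A0 -> V B0 ->
  (forall k A, Psi A -> Psi (image (omega f k) A)) ->
  exists p L, (forall q, In q (p :: L) -> open_pair d q) /\
    forall n, (forall q, In q (p :: L) -> hits_at f n q) ->
      exists A, W A /\ V (image (omega f n) A).
Proof.
  intros Hhm HW HV HA0 HB0 Psi_image.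
  destruct (hit_and_miss_vietoris_base _ d Psi Delta W A0 d_metric Hhm HW HA0)
    as [PsiA0 [G [Ps [HG [HPs [[HA0G HA0Ps] HGW]]]]]].
  destruct (hit_and_miss_vietoris_base _ d Psi Delta V B0 d_metric Hhm HV HB0)
    as [PsiB0 [K [Qs [HK [HQs [[HB0K HB0Qs] HKV]]]]]].
  destruct (Psi_nonempty A0 PsiA0) as [a Ha], (Psi_nonempty B0 PsiB0) as [b Hb].
  set (L := list_prod (G :: Ps) (K :: Qs)).
  assert (HGK : In (G, K) L) by (apply in_prod_iff; split; left; reflexivity).
  exists (G, K), L; split.
  - intros q Hq; apply (open_pairs_of_vietoris G K Ps Qs); auto.
    + exists a; auto.
    + exists b; auto.
    + intros P HP; split; [apply HPs, HP|].
      destruct (HA0Ps P HP) as [x [_ Px]]; exists x; exact Px.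
    + intros Q HQ; split; [apply HQs, HQ|].
      destruct (HB0Qs Q HQ) as [x [_ Qx]]; exists x; exact Qx.
    + destruct Hq as [<- | Hq]; assumption.
  - intros n Hhit.
    destruct (finite_set_between_vietoris f n G K Ps Qs) as [A [HA [HAW HAV]]];
      [intros P HP; apply HPs, HP | intros Q HQ; apply (HQs Q HQ)
      | intros p Hp; apply Hhit; right; exact Hp |].
    exists A; split; [apply HGW | apply HKV]; auto.
Qed.

Lemma hyper_weakly_mixing_of_weakly_mixing :
  hit_and_miss_type d Psi Delta ->
  (forall k A, Psi A -> Psi (image (omega f k) A)) ->
  (forall n m x, f n (f m x) = f m (f n x)) ->
  weakly_mixing d f -> hyper_weakly_mixing f Delta.
Proof.
  intros Hhm Psi_image f_comm Hwm W1 W2 V1 V2 HW1 HW2 HV1 HV2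
    [A1 HA1] [A2 HA2] [B1 HB1] [B2 HB2].
  destruct (hyper_hits_of_open_pairs W1 V1 A1 B1) as [p1 [L1 [HL1 Hhit1]]]; auto.
  destruct (hyper_hits_of_open_pairs W2 V2 A2 B2) as [p2 [L2 [HL2 Hhit2]]]; auto.
  destruct (weakly_mixing_open_pairs X d f f_cont f_comm Hwm (L1 ++ p2 :: L2) p1)
    as [n [Hn Hhit]].
  { intros q [<- | Hq]; [apply HL1; left; reflexivity|].
    apply in_app_or in Hq; destruct Hq; [apply HL1 | apply HL2]; simpl; auto. }
  exists n; split; [exact Hn | split; [apply Hhit1 | apply Hhit2]];
    intros q Hq; apply Hhit; simpl in Hq |- *; rewrite in_app_iff; simpl; tauto.
Qed.

Lemma singleton_finite_nonempty (x : X) : finite_nonempty (singleton x).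
Proof.
  exists (x :: nil); split; [discriminate|].
  intros y; unfold singleton; simpl; split; [intros ->; auto | intros [-> | []]; reflexivity].
Qed.

Lemma weakly_mixing_of_hyper_weakly_mixing (beta : (X -> Prop) -> Prop) :
  is_base d beta -> (forall U, beta U -> Delta (upper Psi U)) ->
  hyper_weakly_mixing f Delta -> weakly_mixing d f.
Proof.
  intros [_ Hbase] Hupper Hhwm U1 U2 V1 V2 HU1 HU2 HV1 HV2
    [x1 Hx1] [x2 Hx2] [y1 Hy1] [y2 Hy2].
  assert (upper_nonempty : forall (B : X -> Prop) z, B z -> nonempty (upper Psi B)).
  { intros B z Hz; exists (singleton z); split;
      [apply Psi_finite, singleton_finite_nonempty | intros y ->; exact Hz]. }
  destruct (Hbase U1 HU1 x1 Hx1) as [B1 [HB1 [Hx1B HB1U]]].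
  destruct (Hbase U2 HU2 x2 Hx2) as [B2 [HB2 [Hx2B HB2U]]].
  destruct (Hbase V1 HV1 y1 Hy1) as [C1 [HC1 [Hy1C HC1V]]].
  destruct (Hbase V2 HV2 y2 Hy2) as [C2 [HC2 [Hy2C HC2V]]].
  destruct (Hhwm _ _ _ _ (Hupper B1 HB1) (Hupper B2 HB2) (Hupper C1 HC1) (Hupper C2 HC2)
              (upper_nonempty _ _ Hx1B) (upper_nonempty _ _ Hx2B)
              (upper_nonempty _ _ Hy1C) (upper_nonempty _ _ Hy2C))
    as [n [Hn [[A [[PsiA HAB] [_ HAC]]] [A' [[PsiA' HA'B] [_ HA'C]]]]]].
  destruct (Psi_nonempty A PsiA) as [a Ha], (Psi_nonempty A' PsiA') as [a' Ha'].
  exists n; split; [exact Hn | split].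
  - exists a; split; [apply HB1U, HAB, Ha | apply HC1V, HAC; exists a; auto].
  - exists a'; split; [apply HB2U, HA'B, Ha' | apply HC2V, HA'C; exists a'; auto].
Qed.

End Transfer.

Theorem mainTheorem6 (X : Type) (d : X -> X -> R) (f : nat -> X -> X)
  (Psi : (X -> Prop) -> Prop) (Delta : ((X -> Prop) -> Prop) -> Prop)
  (beta : (X -> Prop) -> Prop) :
  compact_metric d ->
  (forall n, continuous_map d (f n)) ->
  (forall n m x, f n (f m x) = f m (f n x)) ->
  (forall A, finite_nonempty A -> Psi A) ->
  (forall A, Psi A -> nonempty_compact d A) ->
  (forall k A, Psi A -> Psi (image (omega f k) A)) ->
  admissible d f Psi Delta ->
  is_base d beta ->
  (forall U, beta U -> Delta (upper Psi U)) ->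
  (weakly_mixing d f <-> hyper_weakly_mixing f Delta).
Proof.
  intros [Hmetric _] Hcont Hcomm Hfin Hcompact Himage [Hhm _] Hbase Hupper.
  assert (Psi_nonempty : forall A, Psi A -> nonempty A)
    by (intros A HA; apply (Hcompact A HA)).
  split.
  - apply (hyper_weakly_mixing_of_weakly_mixing X d f Psi Delta); auto.
  - apply (weakly_mixing_of_hyper_weakly_mixing X d f Psi Delta Hfin Psi_nonempty beta); auto.
Qed.
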